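(* If $\mathcal{H}=(V,\mathcal{E})$ is a twin-free hypergraph, then $|V|\leq (TC(\mathcal{H}))^{vc^*(\mathcal{H})}+1$.
   Context: A hypergraph $\mathcal{H}=(V,\mathcal{E})$ (finite) is twin-free if for any two distinct vertices there is a hyperedge containing exactly one of them. A test cover of $\mathcal{H}$ is a set $\mathcal{C}\subseteq\mathcal{E}$ such that every vertex lies in some edge of $\mathcal{C}$ and for every pair $x,y$ of distinct vertices some edge of $\mathcal{C}$ contains exactly one of $x,y$; $TC(\mathcal{H})$ is the minimum size of a test cover. For $X\subseteq V$, the projection is $\mathcal{H}_{|X}=\{e\cap X: e\in\mathcal{E}\}$; $X$ is shattered if $|\mathcal{H}_{|X}|=2^{|X|}$; the VC dimension $vc(\mathcal{H})$ is the maximum size of a shattered set. The dual hypergraph $\mathcal{H}^*$ has the hyperedges of $\mathcal{H}$ as vertices and, for each vertex $v$ of $\mathcal{H}$, a hyperedge consisting of the hyperedges of $\mathcal{H}$ containing $v$; the dual VC dimension is $vc^*(\mathcal{H})=vc(\mathcal{H}^* )$. *)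

From mathcomp Require Import all_boot.
Set Implicit Arguments. Unset Strict Implicit. Unset Printing Implicit Defensive.

Section Hypergraphs.
Variable V : finType.

Definition twin_free (E : {set {set V}}) : Prop :=
  forall x y : V, x != y -> exists2 e, e \in E & (x \in e) != (y \in e).

Definition is_test_cover (E C : {set {set V}}) : Prop :=
  [/\ C \subset E,
      (forall v : V, exists2 e, e \in C & v \in e) &
      (forall x y : V, x != y -> exists2 e, e \in C & (x \in e) != (y \in e))].

Definition is_test_coverb (E C : {set {set V}}) : bool :=
  [&& C \subset E,
      [forall v : V, [exists e in C, v \in e]] &
      [forall x : V, forall y : V, (x != y) ==> [exists e in C, (x \in e) != (y \in e)]]].

(* minimum size of a test cover (meaningful when a test cover exists) *)
Definition TC (E : {set {set V}}) : nat :=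
  \big[minn/#|E|]_(C : {set {set V}} | is_test_coverb E C) #|C|.

Definition proj (E : {set {set V}}) (X : {set V}) : {set {set V}} :=
  [set e :&: X | e in E].

Definition shattered (E : {set {set V}}) (X : {set V}) : bool :=
  #|proj E X| == 2 ^ #|X|.

Definition vc_on (Vs : {set V}) (E : {set {set V}}) : nat :=
  \max_(X : {set V} | (X \subset Vs) && shattered E X) #|X|.

Definition vc (E : {set {set V}}) : nat := vc_on [set: V] E.
End Hypergraphs.

(* dual hypergraph: vertices are the hyperedges of H (elements of E), and
   for each vertex v of H the hyperedge {e in E | v \in e} *)
Definition dual_edges (V : finType) (E : {set {set V}}) : {set {set {set V}}} :=
  [set [set e in E | v \in e] | v : V].

Definition vc_dual (V : finType) (E : {set {set V}}) : nat :=
  vc_on E (dual_edges E).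

From mathcomp Require Import all_boot.
Set Implicit Arguments. Unset Strict Implicit. Unset Printing Implicit Defensive.

(* Take a test cover C of minimum size.  The traces of the vertices on C are
   pairwise distinct, so they form a family of |V| subsets of C; by Pajor's
   lemma this family shatters at least |V| subsets of C.  Every set shattered
   by the traces is also shattered by the dual hypergraph, hence has at most
   d = vc*(H) elements, and a subset of C with at most d elements is either
   empty or the image of a map from {0, ..., d-1} to C. *)

Section Shattering.
Variable T : finType.
Implicit Types (F G : {set {set T}}) (A B X : {set T}) (x : T).

Lemma proj_sub_powerset F X : proj F X \subset powerset X.
Proof. by apply/subsetP => _ /imsetP[A _ ->]; rewrite powersetE subsetIr. Qed.

Lemma shatteredE F X : shattered F X = (powerset X \subset proj F X).
Proof.
by rewrite /shattered -card_powerset (subset_leqif_card (proj_sub_powerset F X)).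
Qed.

Lemma shatteredP F X :
  reflect (forall B, B \subset X -> exists2 A, A \in F & A :&: X = B) (shattered F X).
Proof.
rewrite shatteredE; apply: (iffP subsetP) => [shX B sBX | shX B].
- have /shX/imsetP[A AF ->] : B \in powerset X by rewrite powersetE.
  by exists A.
- by rewrite powersetE => /shX[A AF <-]; apply: imset_f.
Qed.

Lemma shattered_proj_subset F G X :
  proj F X \subset proj G X -> shattered F X -> shattered G X.
Proof. by rewrite !shatteredE => sFG /subset_trans; apply. Qed.

Lemma shattered_subset F G X : F \subset G -> shattered F X -> shattered G X.
Proof. by move=> sFG; apply/shattered_proj_subset/imsetS. Qed.

Lemma shattered_sub_cover F X : shattered F X -> X \subset cover F.
Proof.
case/shatteredP/(_ X (subxx X)) => A AF <-.
exact: subset_trans (subsetIl A X) (bigcup_sup A AF).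
Qed.

Lemma leq_vc_on (Vs : {set T}) F X :
  X \subset Vs -> shattered F X -> #|X| <= vc_on Vs F.
Proof. by move=> sXV shX; apply: leq_bigmax_cond; rewrite sXV. Qed.

Definition shattered_sets F : {set {set T}} := [set X | shattered F X].

Lemma card_split_mem F x :
  #|[set A in F | x \notin A]| + #|[set A in F | x \in A]| = #|F|.
Proof.
rewrite addnC -(cardsID [set A : {set T} | x \in A] F).
by congr (_ + _); apply: eq_card => A; rewrite !inE andbC.
Qed.

Lemma notin_shattered_avoiding F x X :
  shattered [set A in F | x \notin A] X -> x \notin X.
Proof.
move/shattered_sub_cover/subsetP/(_ x)/contra; apply.
by apply/negP => /bigcupP[A]; rewrite inE => /andP[_ /negbTE ->].
Qed.

Lemma notin_shattered_containing F x X :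
  shattered [set A in F | x \in A] X -> x \notin X.
Proof.
case/shatteredP/(_ set0 (sub0set X)) => A; rewrite inE => /andP[_ xA] /setP/(_ x).
by rewrite !inE xA /= => ->.
Qed.

Lemma shattered_setU1 F x X :
  shattered [set A in F | x \notin A] X -> shattered [set A in F | x \in A] X ->
  shattered F (x |: X).
Proof.
move=> /shatteredP sh0 /shatteredP sh1; apply/shatteredP => B sBxX.
have sBX : B :\ x \subset X by rewrite subDset.
have [A AF [xAB eAX]] : exists2 A, A \in F & (x \in A) = (x \in B) /\ A :&: X = B :\ x.
  case xB: (x \in B); [have [A] := sh1 _ sBX | have [A] := sh0 _ sBX];
    by rewrite inE => /andP[AF xA] eAX; exists A; rewrite // (negbTE xA).
exists A => //; apply/setP => y; move/setP/(_ y): eAX; rewrite !inE.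
by case: eqVneq => [-> _ | _ /=]; rewrite ?xAB ?andbT.
Qed.

Lemma card_shattered_split F x :
  #|shattered_sets [set A in F | x \notin A]| + #|shattered_sets [set A in F | x \in A]|
    <= #|shattered_sets F|.
Proof.
set S0 := shattered_sets [set A in F | x \notin A].
set S1 := shattered_sets [set A in F | x \in A].
(* If both halves shatter X, then F shatters x |: X, which neither half does. *)
pose I := [set x |: X | X in S0 :&: S1].
have sub : (S0 :|: S1) :|: I \subset shattered_sets F.
  apply/subsetP => X; rewrite !inE => /orP[/orP[] | /imsetP[Y]].
  - by apply: shattered_subset; apply/subsetP => A; rewrite inE => /andP[].
  - by apply: shattered_subset; apply/subsetP => A; rewrite inE => /andP[].
  - by rewrite !inE => /andP[sh0 sh1] ->; apply: shattered_setU1.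
have disj : (S0 :|: S1) :&: I = set0.
  apply/setP => X; rewrite in_setI in_set0; apply/negP => /andP[XS /imsetP[Y _ eX]].
  move: XS; rewrite eX !inE.
  by case/orP => [/notin_shattered_avoiding | /notin_shattered_containing];
    rewrite setU11.
have cardI : #|I| = #|S0 :&: S1|.
  apply: card_in_imset => X Y; rewrite !inE => /andP[/notin_shattered_avoiding xX _].
  by case/andP => /notin_shattered_avoiding xY _ eXY; rewrite -(setU1K xX) eXY setU1K.
have := cardsUI (S0 :|: S1) I; rewrite disj cards0 addn0 cardI cardsUI => <-.
exact: subset_leq_card.
Qed.

Lemma pajor F : #|F| <= #|shattered_sets F|.
Proof.
have [n] := ubnP #|F|; elim: n F => // n IHn F /ltnSE leFn.
have [leF1 | /card_gt1P[A1 [A2 [A1F A2F neqA]]]] := leqP #|F| 1.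
  have [-> | /set0Pn[A AF]] := eqVneq F set0; first by rewrite cards0.
  apply: leq_trans leF1 _; rewrite card_gt0; apply/set0Pn; exists set0; rewrite inE.
  by apply/shatteredP => B; rewrite subset0 => /eqP->; exists A; rewrite ?setI0.
have [x xA12] : exists x, (x \in A1) != (x \in A2).
  apply/existsP; apply: contraNT neqA => /existsPn eqA.
  by apply/eqP/setP => y; apply/eqP/negbNE/eqA.
wlog [xA1 xA2] : A1 A2 A1F A2F {neqA xA12} / x \in A1 /\ x \notin A2.
  move=> gen; case/boolP: (x \in A1) xA12 => xA1 /=.
    by move=> xA2; apply: (gen A1 A2).
  by rewrite negbK => xA2; apply: (gen A2 A1).
have F0_gt0 : 0 < #|[set A in F | x \notin A]|.
  by apply/card_gt0P; exists A2; rewrite inE A2F.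
have F1_gt0 : 0 < #|[set A in F | x \in A]|.
  by apply/card_gt0P; exists A1; rewrite inE A1F.
rewrite -(card_split_mem F x) in leFn *.
apply: leq_trans (card_shattered_split F x); apply: leq_add; apply: IHn.
- by apply: leq_trans leFn; rewrite -addn1 leq_add2l.
- by apply: leq_trans leFn; rewrite -add1n leq_add2r.
Qed.

Lemma ffun_ord_onto X d :
  X != set0 -> #|X| <= d -> exists f : {ffun 'I_d -> T}, [set f i | i : 'I_d] = X.
Proof.
move=> /set0Pn[t0 Xt0] leXd; exists [ffun i : 'I_d => nth t0 (enum X) i].
apply/setP => t; apply/imsetP/idP => [[i _ ->] | Xt].
  rewrite ffunE; have [ltiX | leXi] := ltnP i (size (enum X)).
    by rewrite -mem_enum mem_nth.
  by rewrite nth_default.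
have lt_index_d : index t (enum X) < d.
  by rewrite (leq_trans _ leXd) // cardE index_mem mem_enum.
by exists (Ordinal lt_index_d); rewrite // ffunE nth_index ?mem_enum.
Qed.

Lemma card_small_subsets (C : {set T}) d (S : {set {set T}}) :
  {in S, forall X, X \subset C /\ #|X| <= d} -> #|S| <= #|C| ^ d + 1.
Proof.
move=> smallS; rewrite (cardsD1 set0) addnC; apply: leq_add; last exact: leq_b1.
rewrite -[d]card_ord -card_ffun_on.
apply: leq_trans (leq_imset_card (fun f : {ffun 'I_d -> T} => [set f i | i : 'I_d]) _).
apply/subset_leq_card/subsetP => X; rewrite !inE => /andP[X0 SX].
have [XC leXd] := smallS X SX; have [f fX] := ffun_ord_onto X0 leXd.
apply/imsetP; exists f => //; apply/ffun_onP => i.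
by apply: (subsetP XC); rewrite -fX; apply/imsetP; exists i.
Qed.

End Shattering.

Section Hypergraph.
Variable V : finType.
Implicit Types (E C X : {set {set V}}).

Lemma is_test_coverP E C : reflect (is_test_cover E C) (is_test_coverb E C).
Proof.
apply: (iffP and3P) => -[CE cov sep]; split=> //.
- by move=> v; apply/exists_inP/(forallP cov v).
- by move=> x y /(forall_inP (forallP sep x) y)/exists_inP.
- by apply/forallP => v; apply/exists_inP.
- by apply/forallP => x; apply/forall_inP => y /sep/exists_inP.
Qed.

Lemma test_cover_le_TC E :
  (exists C, is_test_cover E C) -> exists2 C, is_test_cover E C & #|C| <= TC E.
Proof.
case=> C0 C0tc; rewrite /TC.
apply: (big_ind (fun m => exists2 C, is_test_cover E C & #|C| <= m)).
- by exists C0; rewrite // subset_leq_card //; case: C0tc.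
- by move=> m1 m2 le1 le2; rewrite /minn; case: ifP.
- by move=> C /is_test_coverP; exists C.
Qed.

Lemma test_cover_trace_inj E C :
  is_test_cover E C -> injective (fun v => [set e in C | v \in e]).
Proof.
case=> _ _ sep u v eq_uv; apply/eqP; apply: contraT => /sep[e eC].
by move/setP/(_ e): eq_uv; rewrite !inE eC /= => ->; rewrite eqxx.
Qed.

Lemma cover_dual_edges E : cover (dual_edges E) \subset E.
Proof.
by apply/bigcupsP => _ /imsetP[v _ ->]; apply/subsetP => e; rewrite inE => /andP[].
Qed.

Lemma proj_dual_edges E X : X \subset E -> proj (dual_edges E) X = dual_edges X.
Proof.
move=> sXE; rewrite /proj /dual_edges -imset_comp; apply: eq_imset => v /=.
apply/setP => e; rewrite !inE andbC; case: (boolP (e \in X)) => //= eX.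
by rewrite (subsetP sXE).
Qed.

End Hypergraph.

Theorem proposition1 (V : finType) (E : {set {set V}}) :
  twin_free E ->
  (exists C : {set {set V}}, is_test_cover E C) ->
  #|V| <= (TC E) ^ (vc_dual E) + 1.
Proof.
move=> _ /test_cover_le_TC[C Ctc leCTC].
have CE : C \subset E by case: Ctc.
have cardV : #|V| = #|dual_edges C|.
  by rewrite card_imset //; apply: test_cover_trace_inj Ctc.
have small_shattered :
    {in shattered_sets (dual_edges C), forall X : {set {set V}},
      X \subset C /\ #|X| <= vc_dual E}.
  move=> X; rewrite inE => shX.
  have XC : X \subset C := subset_trans (shattered_sub_cover shX) (cover_dual_edges C).
  have XE := subset_trans XC CE.
  split=> //; apply: (leq_vc_on XE); apply: shattered_proj_subset shX.
  by rewrite (proj_dual_edges XC) (proj_dual_edges XE).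
rewrite cardV (leq_trans (pajor _)) //.
rewrite (leq_trans (card_small_subsets small_shattered)) //.
rewrite leq_add2r; have [-> // | d_gt0] := posnP (vc_dual E).
by rewrite leq_exp2r.
Qed.
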